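(* Let $d_1,d_2\in\mathbb{N}$ and let $X,Y\in\mathcal{M}_{d_1}\otimes\mathcal{M}_{d_1}$ be Hermitian operators such that there exists $\ket{\alpha}\in\mathbb{C}^{d_1}\otimes\mathbb{C}^{d_1}$ with $\bra{\alpha}X\ket{\alpha}=0$ and $\bra{\alpha}Y\ket{\alpha}>0$. Let \[ Z_{A_1B_1A_2B_2} = X_{A_1B_1}\otimes(\mathbb{1}-\omega)_{A_2B_2} + Y_{A_1B_1}\otimes \omega_{A_2B_2} \] on $\mathbb{C}^{d_1}\otimes\mathbb{C}^{d_1}\otimes\mathbb{C}^{d_2}\otimes\mathbb{C}^{d_2}$ (factors labelled $A_1,B_1,A_2,B_2$), where $\omega$ is the maximally entangled projector on $\mathbb{C}^{d_2}\otimes\mathbb{C}^{d_2}$. Then for any $d_2'\in\mathbb{N}$ and any linear map $\mathcal{L}:\mathcal{M}_{d_2}\to\mathcal{M}_{d_2'}$ that is not completely positive, \[ (\mathrm{id}_{A_1}\otimes\mathrm{id}_{B_1}\otimes\mathcal{L}_{A_2}\otimes\mathrm{id}_{B_2})(Z_{A_1B_1A_2B_2}) \] is not positive semidefinite.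
   Context: $\mathcal{M}_d$ denotes complex $d\times d$ matrices. $\omega=\ket{\Omega}\bra{\Omega}$ with $\ket{\Omega}=\frac{1}{\sqrt{d_2}}\sum_{i=1}^{d_2}\ket{i}\otimes\ket{i}$. A linear map $\mathcal{L}:\mathcal{M}_{d}\to\mathcal{M}_{d'}$ is completely positive if $\mathrm{id}_k\otimes\mathcal{L}$ maps positive semidefinite matrices to positive semidefinite matrices for every $k\in\mathbb{N}$. *)

From HB Require Import structures.
From mathcomp Require Import all_boot all_order all_algebra.
From mathcomp Require Import sesquilinear.
From mathcomp Require Import mxtens.
Set Implicit Arguments. Unset Strict Implicit. Unset Printing Implicit Defensive.
Import Order.TTheory GRing.Theory Num.Theory.
Local Open Scope ring_scope.

Section Defs.
Variable C : numClosedFieldType.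

Definition adjmx m n (A : 'M[C]_(m, n)) : 'M[C]_(n, m) := map_mx Num.conj A^T.

Definition qform n (M : 'M[C]_n) (v : 'cV[C]_n) : C := (adjmx v *m M *m v) 0 0.

(* positive semidefinite: <v|M|v> is a nonnegative real for every v *)
Definition psdmx n (M : 'M[C]_n) : Prop := forall v : 'cV[C]_n, 0 <= qform M v.

(* |Omega> = d^{-1/2} sum_i |i>|i> in C^d (x) C^d (Kronecker index via mxtens_index) *)
Definition Omega_vec d : 'cV[C]_(d * d) :=
  \col_(k < d * d) (if (mxtens_unindex k).1 == (mxtens_unindex k).2
          then (sqrtC (d%:R : C))^-1 else 0).

Definition omega d : 'M[C]_(d * d) := Omega_vec d *m adjmx (Omega_vec d).

(* (id_k (x) L)(M) for M on C^k (x) C^d *)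
Definition idtensL k d d' (L : 'M[C]_d -> 'M[C]_d') (M : 'M[C]_(k * d))
  : 'M[C]_(k * d') :=
  \matrix_(i, j)
    L (\matrix_(p, q) M (mxtens_index ((mxtens_unindex i).1, p))
                        (mxtens_index ((mxtens_unindex j).1, q)))
      (mxtens_unindex i).2 (mxtens_unindex j).2.

(* (id_a (x) L (x) id_c)(M) for M on C^a (x) (C^d (x) C^c) *)
Definition midL a d d' c (L : 'M[C]_d -> 'M[C]_d') (M : 'M[C]_(a * (d * c)))
  : 'M[C]_(a * (d' * c)) :=
  \matrix_(i, j)
    let: (i1, i23) := mxtens_unindex i in
    let: (i2, i3) := mxtens_unindex i23 in
    let: (j1, j23) := mxtens_unindex j in
    let: (j2, j3) := mxtens_unindex j23 in
    L (\matrix_(p, q) M (mxtens_index (i1, mxtens_index (p, i3)))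
                        (mxtens_index (j1, mxtens_index (q, j3)))) i2 j2.

Definition completely_positive d d' (L : 'M[C]_d -> 'M[C]_d') : Prop :=
  forall (k : nat) (M : 'M[C]_(k * d)), psdmx M -> psdmx (idtensL L M).

End Defs.

(* Evaluate the quadratic form of Z at a product vector alpha (x) w.  Since
   <alpha|X|alpha> = 0, only the Y-part survives and it factorises as
   <alpha|Y|alpha> * <w|(L (x) id)(omega)|w>, with <alpha|Y|alpha> > 0.  As
   (L (x) id)(omega) is the Choi matrix of L divided by d2, positivity of the
   image of Z makes the Choi matrix positive semidefinite, and then L is
   completely positive by Choi's theorem: write a positive semidefinite M as a
   sum of rank-one matrices u^* u (spectral theorem); the form of
   (id (x) L)(u^* u) at v is the form of the Choi matrix at a vector built
   from u and v. *)

From mathcomp Require Import all_boot all_order all_algebra.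
From mathcomp Require Import sesquilinear spectral mxtens ring.
Import Order.TTheory GRing.Theory Num.Theory.
Local Open Scope ring_scope.

Section ChoiCriterion.
Variable C : numClosedFieldType.

Lemma qformE n (A : 'M[C]_n) v :
  qform A v = \sum_i \sum_j (v i 0)^* * A i j * v j 0.
Proof.
rewrite /qform mxE exchange_big; apply: eq_bigr => j _.
by rewrite mxE mulr_suml; apply: eq_bigr => i _; rewrite !mxE.
Qed.

Lemma qformD n (A B : 'M[C]_n) v : qform (A + B) v = qform A v + qform B v.
Proof. by rewrite /qform mulmxDr mulmxDl mxE. Qed.

Lemma qformB n (A B : 'M[C]_n) v : qform (A - B) v = qform A v - qform B v.
Proof. by rewrite /qform mulmxBr mulmxBl !mxE. Qed.

Lemma qformZ n (A : 'M[C]_n) a v : qform (a *: A) v = a * qform A v.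
Proof. by rewrite /qform -scalemxAr -scalemxAl mxE. Qed.

Lemma qform_sum n I (r : seq I) (A : I -> 'M[C]_n) v :
  qform (\sum_(i <- r) A i) v = \sum_(i <- r) qform (A i) v.
Proof.
rewrite /qform mulmx_sumr mulmx_suml summxE.
by apply: eq_bigr => i _; rewrite mxE.
Qed.

Lemma adjmxK {m n} : cancel (@adjmx C m n) (@adjmx C n m).
Proof. exact: trmxCK. Qed.

Lemma adjmx_mul m n p (A : 'M[C]_(m, n)) (B : 'M[C]_(n, p)) :
  adjmx (A *m B) = adjmx B *m adjmx A.
Proof. by rewrite /adjmx trmx_mul map_mxM. Qed.

Lemma qform_adjmx n (A : 'M[C]_n) v : qform (adjmx A) v = (qform A v)^*.
Proof.
by rewrite /qform -{2}(adjmxK v) -!adjmx_mul mulmxA !mxE.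
Qed.

Lemma adjmx_delta_mul n (A : 'M[C]_n) k l :
  adjmx (delta_mx k 0 : 'cV[C]_n) *m A *m delta_mx l 0 = (A k l)%:M.
Proof.
have -> : adjmx (delta_mx k 0 : 'cV[C]_n) = delta_mx 0 k.
  by apply/matrixP => a b; rewrite !mxE conjC_nat andbC.
by rewrite [LHS]mx11_scalar -rowE -colE !mxE.
Qed.

Lemma qform_delta2 n (A : 'M[C]_n) i j c :
  qform A (delta_mx i 0 + c *: delta_mx j 0) =
  A i i + c * A i j + c^* * A j i + c^* * c * A j j.
Proof.
have adjD : adjmx (delta_mx i 0 + c *: delta_mx j 0)
             = adjmx (delta_mx i 0) + c^* *: adjmx (delta_mx j 0 : 'cV[C]_n).
  by rewrite /adjmx linearD linearZ /= map_mxD map_mxZ.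
rewrite /qform adjD !(mulmxDl, mulmxDr) -!(scalemxAl, scalemxAr).
rewrite !adjmx_delta_mul !mxE.
by rewrite !eqxx !mulr1n; ring.
Qed.

Lemma qform_eq0 n (A : 'M[C]_n) : (forall v, qform A v = 0) -> A = 0.
Proof.
move=> A0; have Aii i : A i i = 0.
  have := A0 (delta_mx i 0 + 0 *: delta_mx i 0).
  by rewrite qform_delta2 rmorph0 !mul0r !addr0.
apply/matrixP => i j; rewrite mxE.
have := A0 (delta_mx i 0 + 1 *: delta_mx j 0).
have := A0 (delta_mx i 0 + 'i *: delta_mx j 0).
rewrite !qform_delta2 !Aii conjCi rmorph1 !mulr0 !addr0 !mul1r add0r.
rewrite mulNr -mulrBr add0r => /eqP + /eqP.
rewrite mulf_eq0 (negbTE (neq0Ci _)) subr_eq0 => /eqP <-.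
by rewrite -mulr2n mulrn_eq0 => /eqP.
Qed.

Lemma psdmx_hermsym n (A : 'M[C]_n) : psdmx A -> A \is hermsymmx.
Proof.
move=> A_psd; apply/is_hermitianmxP; rewrite expr0 scale1r -/(adjmx A).
apply/eqP; rewrite -subr_eq0; apply/eqP/qform_eq0 => v.
by rewrite qformB qform_adjmx (conj_Creal (ger0_real (A_psd v))) subrr.
Qed.

Lemma psdmx_sum_rank1 n (A : 'M[C]_n) : psdmx A ->
  exists u : 'I_n -> 'rV[C]_n, A = \sum_r adjmx (u r) *m u r.
Proof.
move=> A_psd; have /hermitian_normalmx/orthomx_spectralP := psdmx_hermsym _ _ A_psd.
have P_unitary := spectral_unitarymx A.
rewrite invmx_unitary //; set P := spectralmx A; set D := spectral_diag A.
rewrite -/(adjmx P) => A_eq.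
have PPt : P *m adjmx P = 1%:M by apply/unitarymxP.
have D_ge0 r : 0 <= D 0 r.
  have := A_psd (adjmx P *m delta_mx r 0).
  rewrite /qform adjmx_mul adjmxK A_eq !mulmxA -!(mulmxA _ P (adjmx P)) PPt.
  by rewrite !mulmx1 adjmx_delta_mul !mxE !eqxx !mulr1n.
exists (fun r => sqrtC (D 0 r) *: row r P).
apply/matrixP => i j; rewrite {1}A_eq mul_mx_diag summxE.
rewrite mxE; apply: eq_bigr => r _; rewrite /adjmx !mxE big_ord1 !mxE.
rewrite rmorphM /= (conj_Creal (sqrtC_real (D_ge0 r))).
rewrite -[D 0 r in LHS]sqrtCK expr2; ring.
Qed.

Lemma psdmx_dim0 n (A : 'M[C]_n) : n = 0%N -> psdmx A.
Proof.
by move=> n0 v; rewrite qformE big1 // => i; have := ltn_ord i; rewrite {2}n0.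
Qed.

Lemma sum_mxtens (R : nmodType) m n (F : 'I_(m * n) -> R) :
  \sum_k F k = \sum_(i < m) \sum_(j < n) F (mxtens_index (i, j)).
Proof.
rewrite pair_big (reindex (@mxtens_index m n)) /=; last first.
  by exists (@mxtens_unindex m n) => x _; rewrite (mxtens_indexK, mxtens_unindexK).
by apply: eq_bigr => -[i j].
Qed.

Lemma qform_mxtens m n (A : 'M[C]_(m * n)) v :
  qform A v = \sum_a \sum_i \sum_b \sum_j
    (v (mxtens_index (a, i)) 0)^* * A (mxtens_index (a, i)) (mxtens_index (b, j))
      * v (mxtens_index (b, j)) 0.
Proof.
rewrite qformE sum_mxtens; apply: eq_bigr => a _; apply: eq_bigr => i _.
exact: sum_mxtens.
Qed.

Lemma adjmx_tens m n p q (A : 'M[C]_(m, n)) (B : 'M[C]_(p, q)) :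
  adjmx (A *t B) = adjmx A *t adjmx B.
Proof. by rewrite /adjmx trmx_tens map_mxT. Qed.

Lemma qform_tens m n (A : 'M[C]_m) (B : 'M[C]_n) (u : 'cV[C]_m) (w : 'cV[C]_n) :
  qform (A *t B) (u *t w) = qform A u * qform B w.
Proof.
have E : adjmx (u *t w) *m (A *t B) *m (u *t w)
          = (adjmx u *m A *m u) *t (adjmx w *m B *m w).
  by rewrite adjmx_tens !tensmx_mul.
(* [u *t w] has [1 * 1] columns, which is [1] only up to conversion, so the
   entry is read through [mxtens_index]. *)
have idx00 : mxtens_index (ord0, ord0) = 0 :> 'I_(1 * 1) by apply: val_inj.
have /= := congr1 (fun M : 'M_(1 * 1) => M (mxtens_index (ord0, ord0))
                                          (mxtens_index (ord0, ord0))) E.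
by rewrite tensmxE idx00.
Qed.

Lemma exchange_big6 (R : nmodType) n1 n2 n3 n4 n5 n6
    (F : 'I_n1 -> 'I_n2 -> 'I_n3 -> 'I_n4 -> 'I_n5 -> 'I_n6 -> R) :
  \sum_a \sum_i \sum_b \sum_j \sum_p \sum_q F a i b j p q =
  \sum_i \sum_p \sum_j \sum_q \sum_a \sum_b F a i b j p q.
Proof.
rewrite exchange_big; apply: eq_bigr => i _.
under eq_bigr => a _ do under eq_bigr => b _ do rewrite exchange_big.
under eq_bigr => a _ do rewrite exchange_big.
rewrite exchange_big; apply: eq_bigr => p _.
under eq_bigr => a _ do rewrite exchange_big.
rewrite exchange_big; apply: eq_bigr => j _.
under eq_bigr => a _ do rewrite exchange_big.
by rewrite exchange_big.
Qed.

Definition choi_mx {d d'} (L : 'M[C]_d -> 'M[C]_d') : 'M[C]_(d' * d) :=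
  \matrix_(x, y) L (delta_mx (mxtens_unindex x).2 (mxtens_unindex y).2)
      (mxtens_unindex x).1 (mxtens_unindex y).1.

Section IdTensor.
Variables (d d' : nat) (L : {linear 'M[C]_d -> 'M[C]_d'}).

Lemma idtensL_sum k I (r : seq I) (M : I -> 'M[C]_(k * d)) :
  idtensL L (\sum_(i <- r) M i) = \sum_(i <- r) idtensL L (M i).
Proof.
apply/matrixP => x y; rewrite !mxE summxE.
under [RHS]eq_bigr do rewrite mxE.
set a := (mxtens_unindex x).1; set b := (mxtens_unindex y).1.
have -> : \matrix_(p, q) (\sum_(i <- r) M i) (mxtens_index (a, p)) (mxtens_index (b, q))
          = \sum_(i <- r) \matrix_(p, q) M i (mxtens_index (a, p)) (mxtens_index (b, q)).
  by apply/matrixP => p q; rewrite !mxE !summxE; apply: eq_bigr => i _; rewrite mxE.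
by rewrite linear_sum summxE.
Qed.

Lemma idtensL_mxtens k (M : 'M[C]_(k * d)) a i b j :
  idtensL L M (mxtens_index (a, i)) (mxtens_index (b, j)) =
  \sum_p \sum_q M (mxtens_index (a, p)) (mxtens_index (b, q)) * L (delta_mx p q) i j.
Proof.
rewrite mxE !mxtens_indexK /= [X in L X]matrix_sum_delta linear_sum summxE.
apply: eq_bigr => p _; rewrite linear_sum summxE; apply: eq_bigr => q _.
by rewrite linearZ !mxE.
Qed.

Lemma qform_idtensL_rank1 k (u : 'rV[C]_(k * d)) (v : 'cV[C]_(k * d')) :
  qform (idtensL L (adjmx u *m u)) v =
  qform (choi_mx L) (\col_x \sum_a v (mxtens_index (a, (mxtens_unindex x).1)) 0
                                  * u 0 (mxtens_index (a, (mxtens_unindex x).2))).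
Proof.
rewrite !qform_mxtens.
transitivity (\sum_a \sum_i \sum_b \sum_j \sum_p \sum_q
   ((v (mxtens_index (a, i)) 0)^* * (u 0 (mxtens_index (a, p)))^*
    * L (delta_mx p q) i j * v (mxtens_index (b, j)) 0
    * u 0 (mxtens_index (b, q)))).
  apply: eq_bigr => a _; apply: eq_bigr => i _.
  apply: eq_bigr => b _; apply: eq_bigr => j _.
  rewrite idtensL_mxtens mulr_sumr mulr_suml; apply: eq_bigr => p _.
  rewrite mulr_sumr mulr_suml; apply: eq_bigr => q _.
  by rewrite /adjmx !mxE big_ord1 !mxE; ring.
rewrite exchange_big6.
apply: eq_bigr => i _; apply: eq_bigr => p _.
apply: eq_bigr => j _; apply: eq_bigr => q _.
rewrite !mxE !mxtens_indexK /= rmorph_sum /= !mulr_suml; apply: eq_bigr => a _.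
rewrite mulr_sumr; apply: eq_bigr => b _.
by rewrite rmorphM /=; ring.
Qed.

Lemma choi_psd_completely_positive : psdmx (choi_mx L) -> completely_positive L.
Proof.
move=> J_psd k M /psdmx_sum_rank1 [u ->] v.
rewrite idtensL_sum qform_sum; apply: sumr_ge0 => r _.
by rewrite qform_idtensL_rank1; apply: J_psd.
Qed.

End IdTensor.

Definition Ltensid {d d' c} (L : 'M[C]_d -> 'M[C]_d') (N : 'M[C]_(d * c))
    : 'M[C]_(d' * c) :=
  \matrix_(x, y) L (\matrix_(p, q) N (mxtens_index (p, (mxtens_unindex x).2))
                                    (mxtens_index (q, (mxtens_unindex y).2)))
      (mxtens_unindex x).1 (mxtens_unindex y).1.

Lemma midLD a d d' c (L : {linear 'M[C]_d -> 'M[C]_d'})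
    (M N : 'M[C]_(a * (d * c))) :
  midL L (M + N) = midL L M + midL L N.
Proof.
apply/matrixP => i j; rewrite !mxE.
case: (mxtens_unindex i) => i1 i23; case: (mxtens_unindex i23) => i2 i3.
case: (mxtens_unindex j) => j1 j23; case: (mxtens_unindex j23) => j2 j3.
pose P (p : 'I_d) := mxtens_index (i1, mxtens_index (p, i3)).
pose Q (q : 'I_d) := mxtens_index (j1, mxtens_index (q, j3)).
have -> : \matrix_(p, q) (M + N) (P p) (Q q)
          = \matrix_(p, q) M (P p) (Q q) + \matrix_(p, q) N (P p) (Q q).
  by apply/matrixP => p q; rewrite !mxE.
by rewrite linearD mxE.
Qed.

Lemma midL_tens a d d' c (L : {linear 'M[C]_d -> 'M[C]_d'}) (X : 'M[C]_a)
    (N : 'M[C]_(d * c)) :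
  midL L (X *t N) = X *t Ltensid L N.
Proof.
apply/matrixP => i j.
case: (mxtens_indexP i) => i1 i23; case: (mxtens_indexP j) => j1 j23.
case: (mxtens_indexP i23) => i2 i3; case: (mxtens_indexP j23) => j2 j3.
rewrite tensmxE !mxE !mxtens_indexK.
have -> : \matrix_(p, q) (X *t N) (mxtens_index (i1, mxtens_index (p, i3)))
                                 (mxtens_index (j1, mxtens_index (q, j3)))
          = X i1 j1 *: \matrix_(p, q) N (mxtens_index (p, i3)) (mxtens_index (q, j3)).
  by apply/matrixP => p q; rewrite mxE tensmxE !mxE.
by rewrite linearZ mxE.
Qed.

Lemma Ltensid_omega d d' (L : {linear 'M[C]_d -> 'M[C]_d'}) :
  Ltensid L (omega C d) = d%:R^-1 *: choi_mx L.
Proof.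
have sqrt_inv2 : (sqrtC (d%:R : C))^-1 * ((sqrtC (d%:R : C))^-1)^* = d%:R^-1.
  have s_real : (sqrtC (d%:R : C))^-1 \is Num.real.
    by rewrite realV ger0_real // sqrtC_ge0 ler0n.
  by rewrite (conj_Creal s_real) -invfM -expr2 sqrtCK.
apply/matrixP => x y; rewrite !mxE.
set i := (mxtens_unindex x).2; set j := (mxtens_unindex y).2.
have -> : \matrix_(p, q) omega C d (mxtens_index (p, i)) (mxtens_index (q, j))
          = d%:R^-1 *: delta_mx i j.
  apply/matrixP => p q; rewrite /omega !mxE big_ord1 !mxE !mxtens_indexK /=.
  by case: (p == i); case: (q == j); rewrite ?rmorph0 ?mulr0 ?mul0r ?mulr1 ?sqrt_inv2.
by rewrite linearZ mxE.
Qed.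

End ChoiCriterion.

Theorem lemma2 (C : numClosedFieldType) (d1 d2 : nat)
  (X Y : 'M[C]_(d1 * d1))
  (hX : X \is hermsymmx) (hY : Y \is hermsymmx)
  (hα : exists alpha : 'cV[C]_(d1 * d1),
          qform X alpha = 0 /\ 0 < qform Y alpha) :
  forall (d2' : nat) (L : {linear 'M[C]_d2 -> 'M[C]_d2'}),
    ~ completely_positive L ->
    ~ psdmx (midL L (X *t (1%:M - omega C d2) + Y *t omega C d2)).
Proof.
move=> d2' L L_not_cp Z_psd; apply/L_not_cp/choi_psd_completely_positive.
(* For d2 = 0 the normalisation d2%:R^-1 is 0, but the Choi matrix is empty. *)
have [d2_0 | d2_gt0] := posnP d2.
  by apply: psdmx_dim0; rewrite d2_0 muln0.
have [alpha [Xalpha0 Yalpha_gt0]] := hα.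
have d2_inv_gt0 : 0 < d2%:R^-1 :> C by rewrite invr_gt0 ltr0n.
move=> w; have := Z_psd (alpha *t w).
rewrite midLD !midL_tens qformD !qform_tens Xalpha0 mul0r add0r.
by rewrite Ltensid_omega qformZ !pmulr_rge0.
Qed.
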